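(* Let $(g(x))_{x\ge0}$ be a semigroup of linear maps on a real finite-dimensional vector space $V$. Then there exists a decomposition $V=\bigoplus_{i=1}^n V_i$ with $\dim V_i\ge1$ such that each $V_i$ is $g(x)$-invariant for all $x\ge0$, and for each $i$ one of the following holds: (1) for every $x\ge0$, $g(x)|_{V_i}$ has exactly one eigenvalue $\lambda(x)$ (over $\mathbb C$), and $\lambda(x)$ is real with $\lambda(x)\ge0$; or (2) for every $x\ge0$, the set of (complex) eigenvalues of $g(x)|_{V_i}$ is contained in $\{\lambda(x),\overline{\lambda(x)}\}$ for some $\lambda(x)\in\mathbb C$, and $\lambda(x)\notin\mathbb R$ for at least one $x\ge0$.
   Context: A semigroup is a map $g:[0,\infty)\to L(V)$ with $g(0)=\mathrm{id}$ and $g(x+y)=g(x)g(y)$ for all $x,y\ge0$, where $L(V)$ denotes the linear maps $V\to V$. *)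

From HB Require Import structures.
From mathcomp Require Import all_boot all_order all_algebra.
From mathcomp Require Import reals.
From mathcomp Require Import complex.
Set Implicit Arguments. Unset Strict Implicit. Unset Printing Implicit Defensive.
Import Order.TTheory GRing.Theory Num.Theory.
Local Open Scope ring_scope.

(* Linear maps V -> V with V = R^n act on row vectors: v |-> v *m A.
   A subspace of V is the row space of a square matrix U : 'M_n. *)

(* Matrix of the restriction of A to the (A-invariant) subspace U,
   in the basis given by the rows of row_base U. *)
Definition restrict (R : fieldType) (n : nat) (U A : 'M[R]_n) : 'M[R]_(\rank U) :=
  row_base U *m A *m pinvmx (row_base U).

Definition restrictC (R : rcfType) (n : nat) (U A : 'M[R]_n) : 'M[R[i]]_(\rank U) :=
  map_mx (real_complex R) (restrict U A).

Definition case1 (R : rcfType) (n : nat) (U : 'M[R]_n) (g : R -> 'M[R]_n) : Prop :=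
  forall x : R, 0 <= x ->
    exists l : R, 0 <= l /\
      forall mu : R[i], eigenvalue (restrictC U (g x)) mu = (mu == real_complex R l).

Definition case2 (R : rcfType) (n : nat) (U : 'M[R]_n) (g : R -> 'M[R]_n) : Prop :=
  exists lam : R -> R[i],
    (forall x : R, 0 <= x -> forall mu : R[i],
        eigenvalue (restrictC U (g x)) mu -> mu = lam x \/ mu = conjc (lam x)) /\
    (exists x : R, 0 <= x /\ Im (lam x) != 0).

From Pilot Require Import Defs.
From HB Require Import structures.
From mathcomp Require Import all_boot all_order all_algebra.
From mathcomp Require Import reals complex ring boolp zify.
Set Implicit Arguments. Unset Strict Implicit. Unset Printing Implicit Defensive.
Import Order.TTheory GRing.Theory Num.Theory.
Local Open Scope ring_scope.
Local Open Scope complex_scope.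

(* The operators g x commute, so every matrix N built from some g x0 commutes
   with the whole semigroup, and the Fitting decomposition
   W = (W :&: ker N^n) (+) W N^n of an invariant subspace W consists of
   invariant subspaces.  If g x0 has on W two complex eigenvalues mu1, mu2 with
   mu2 not in {mu1, conj mu1}, the real matrix N = (g x0 - mu1)(g x0 - conj mu1)
   kills the mu1-eigenvector but not the mu2-eigenvector, so both parts are
   nonzero.  Induction on the rank then splits V into invariant "primary"
   subspaces, on which every g x has its complex spectrum inside one conjugate
   pair {lam x, conj lam x}.  On a primary subspace either some lam x is
   non-real (case 2), or all are real; then g x = g (x/2)^2 forces the single
   eigenvalue to be a square, hence nonnegative (case 1). *)

Section FittingLemma.
Variables (K : fieldType) (n : nat) (B : 'M[K]_n).

Lemma kermx_pow_mono k j : (kermx (B ^+ k) <= kermx (B ^+ (j + k)%N))%MS.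
Proof. by apply/sub_kermxP; rewrite addnC exprD -mulmxE mulmxA mulmx_ker mul0mx. Qed.

Lemma kermx_pow_stable k : (kermx (B ^+ k.+1) <= kermx (B ^+ k))%MS ->
  forall j, (kermx (B ^+ (j + k)%N) <= kermx (B ^+ k))%MS.
Proof.
move=> stop; elim=> // j IH; apply: submx_trans IH; apply/sub_kermxP.
have shift : (kermx (B ^+ (j.+1 + k)) *m B ^+ j <= kermx (B ^+ k.+1))%MS.
  apply/sub_kermxP; rewrite -mulmxA -[_ *m B ^+ k.+1]/(_ * _) -exprD.
  by rewrite addnS -addSn mulmx_ker.
move/sub_kermxP: (submx_trans shift stop).
by rewrite -mulmxA -[_ *m B ^+ k]/(_ * _) -exprD.
Qed.

(* Since the ranks are bounded by n, the chain stops growing within n steps. *)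
Lemma kermx_pow_stationary :
  exists2 k, (k <= n)%N & (kermx (B ^+ k.+1) <= kermx (B ^+ k))%MS.
Proof.
suff /existsP[k stop] : [exists k : 'I_n.+1, kermx (B ^+ k.+1) <= kermx (B ^+ k)]%MS.
  by exists k; rewrite // -ltnS.
apply: contraT; rewrite negb_exists => /forallP grows.
have rank_ge k : (k <= n.+1)%N -> (k <= \rank (kermx (B ^+ k)))%N.
  elim: k => // k IH lt_k; have := grows (Ordinal lt_k).
  rewrite -(ltn_leqif (mxrank_leqif_sup (kermx_pow_mono k 1))) add1n.
  exact/leq_ltn_trans/IH/ltnW.
by have := rank_ge _ (leqnn _); rewrite ltnNge rank_leq_col.
Qed.

Lemma kermx_pow_double : (kermx (B ^+ (n + n)%N) <= kermx (B ^+ n))%MS.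
Proof.
have [k le_kn stop] := kermx_pow_stationary.
rewrite -(subnK (leq_trans le_kn (leq_addr n n))).
apply: submx_trans (kermx_pow_stable stop _) _.
by have := kermx_pow_mono k (n - k); rewrite subnK.
Qed.

Lemma kermx_cap_pow_eq0 : (kermx (B ^+ n) :&: B ^+ n)%MS = 0.
Proof.
apply/eqP/rowV0P => v; rewrite sub_capmx => /andP[/sub_kermxP vN /submxP[D defv]].
rewrite defv in vN *.
have : (D <= kermx (B ^+ (n + n)%N))%MS.
  by apply/sub_kermxP; rewrite exprD -mulmxE mulmxA.
by move/submx_trans/(_ kermx_pow_double)/sub_kermxP.
Qed.

End FittingLemma.

Section RestrictionEigen.
Variable K : fieldType.

Lemma eigenvalue_restrict_rowfree r m (B : 'M[K]_(r, m)) (f : 'M_m) a :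
  row_free B -> stablemx B f ->
  eigenvalue (B *m f *m pinvmx B) a <->
  exists v : 'rV_m, [/\ v != 0, (v <= B)%MS & v *m f = a *: v].
Proof.
move=> Bfree Bf; split.
  move/eigenvalueP=> [w wf w0]; exists (w *m B); split; last 2 first.
  - exact: submxMl.
  - by rewrite -mulmxA -[B *m f](mulmxKpV Bf) mulmxA wf -scalemxAl.
  by rewrite mul_mx_rowfree_eq0.
move=> [v [v0 vB vf]]; apply/eigenvalueP; exists (v *m pinvmx B).
  apply: (row_free_inj Bfree) => /=.
  by rewrite -scalemxAl (mulmxKpV vB) -mulmxA (mulmxKpV Bf) mulmxA (mulmxKpV vB).
by apply: contraNneq v0 => w0; rewrite -(mulmxKpV vB) w0 mul0mx.
Qed.

Lemma eigenvector_pow m (v : 'rV[K]_m) (M : 'M_m) c k :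
  v *m M = c *: v -> v *m M ^+ k = c ^+ k *: v.
Proof.
move=> vM; elim: k => [|k IH]; first by rewrite !expr0 mulmx1 scale1r.
by rewrite exprSr -mulmxE mulmxA IH -scalemxAl vM scalerA exprSr.
Qed.

Lemma stablemx_exp m p (V : 'M[K]_(p, m)) (f : 'M_m) k :
  stablemx V f -> stablemx V (f ^+ k).
Proof.
move=> Vf; elim: k => [|k IH]; first by rewrite expr0 mulmx1.
by rewrite exprSr; apply: stablemxM.
Qed.

Lemma eigenvector_quadratic m (v : 'rV[K]_m) (A : 'M_m) mu a b :
  v *m A = mu *: v -> v *m (A *m (A - a%:M) + b%:M) = (mu * (mu - a) + b) *: v.
Proof.
move=> vA; rewrite mulmxDr mulmxA vA -scalemxAl mulmxBr vA mul_mx_scalar.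
by rewrite mul_mx_scalar -scalerBl scalerA scalerDl.
Qed.

End RestrictionEigen.

Section Complexification.
Context {R : rcfType} {n : nat}.
Local Notation phi M := (map_mx (real_complex R) M).

Definition eigenvalueC (U A : 'M[R]_n) (mu : R[i]) : Prop :=
  exists v : 'rV[R[i]]_n, [/\ v != 0, (v <= phi U)%MS & v *m phi A = mu *: v].

Lemma eigenvalueCP {U A mu} : stablemx U A ->
  eigenvalue (restrictC U A) mu <-> eigenvalueC U A mu.
Proof.
move=> UA.
have -> : restrictC U A = phi (row_base U) *m phi A *m pinvmx (phi (row_base U)).
  by rewrite /restrictC /Defs.restrict map_mxM map_pinvmx map_mxM.
rewrite eigenvalue_restrict_rowfree ?row_free_map ?row_base_free //; last first.
  by rewrite -map_mxM map_submx stablemx_row_base.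
have defU : (phi (row_base U) :=: phi U)%MS by apply/map_eqmx/eq_row_base.
by split=> -[v [v0 vU vA]]; exists v; split; rewrite ?defU // -defU.
Qed.

(* Over the algebraically closed field R[i] a nonzero stable subspace carries
   an eigenvector. *)
Lemma eigenvalueC_exists {U A} : stablemx U A -> (0 < \rank U)%N ->
  exists mu, eigenvalueC U A mu.
Proof.
move=> UA U0; have : size (char_poly (restrictC U A)) != 1.
  by rewrite size_char_poly eqSS -lt0n.
move/closed_rootP => [mu]; rewrite -eigenvalue_root_char => /(eigenvalueCP UA).
by exists mu.
Qed.

Lemma mxrank_gt0_map {M : 'M[R]_n} {v : 'rV[R[i]]_n} :
  v != 0 -> (v <= phi M)%MS -> (0 < \rank M)%N.
Proof.
move=> v0 vM; rewrite lt0n mxrank_eq0 -(map_mx_eq0 (real_complex R)).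
by move: v0; apply: contraNneq => M0; move: vM; rewrite M0 submx0.
Qed.

End Complexification.

(* z + conj z and z * conj z are real: they are the coefficients of the real
   quadratic polynomial whose roots are z and conj z. *)
Lemma Re_addcJ (R : rcfType) (z : R[i]) : (complex.Re (z + conjc z))%:C = z + conjc z.
Proof. by case: z => a b /=; congr (Complex _ _); rewrite subrr. Qed.

Lemma Re_mulcJ (R : rcfType) (z : R[i]) : (complex.Re (z * conjc z))%:C = z * conjc z.
Proof. by case: z => a b /=; congr (Complex _ _); rewrite mulrN mulrC addNr. Qed.

Section Semigroup.
Variables (R : rcfType) (n : nat) (g : R -> 'M[R]_n).
Hypothesis gD : forall x y : R, 0 <= x -> 0 <= y -> g (x + y) = g x *m g y.
Local Notation phi M := (map_mx (real_complex R) M).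

Lemma semigroup_comm x y : 0 <= x -> 0 <= y -> comm_mx (g x) (g y).
Proof. by move=> x0 y0; rewrite /comm_mx -!gD // addrC. Qed.

Definition invariant (U : 'M[R]_n) : Prop := forall x, 0 <= x -> stablemx U (g x).

Lemma invariant_fitting_split W N : invariant W -> stablemx W N ->
  (forall x, 0 <= x -> comm_mx (g x) N) ->
  [/\ invariant (W :&: kermx (N ^+ n))%MS, invariant (W *m N ^+ n),
      (\rank (W :&: kermx (N ^+ n)) + \rank (W *m N ^+ n))%N = \rank W
    & (W :&: kermx (N ^+ n) + W *m N ^+ n == W)%MS].
Proof.
move=> invW WN commN; set F := N ^+ n.
have commF x : 0 <= x -> comm_mx F (g x).
  by move=> x0; apply/comm_mx_sym; rewrite comm_mxE; apply/commrX/commN.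
have rankW : (\rank (W :&: kermx F) + \rank (W *m F))%N = \rank W.
  by rewrite addnC mxrank_mul_ker.
have cap0 : (W :&: kermx F :&: W *m F)%MS = 0.
  apply/eqP; rewrite -submx0 -(kermx_cap_pow_eq0 N).
  by rewrite capmxS ?capmxSr ?submxMl.
split=> // [x x0|x x0|].
- rewrite sub_capmx (submx_trans (submxMr _ (capmxSl _ _)) (invW x x0)) /=.
  exact: submx_trans (submxMr _ (capmxSr _ _)) (comm_mx_stable_ker (commF x x0)).
- by rewrite -mulmxA (commF x x0) mulmxA submxMr ?invW.
have sumW : (W :&: kermx F + W *m F <= W)%MS.
  by rewrite addsmx_sub capmxSl stablemx_exp.
by rewrite -(mxrank_leqif_eq sumW).2 mxrank_disjoint_sum // rankW.
Qed.

Definition invariant_split (W : 'M[R]_n) : Prop :=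
  exists W1 W2 : 'M[R]_n,
    [/\ invariant W1, invariant W2, (0 < \rank W1)%N, (0 < \rank W2)%N
      & (\rank W1 + \rank W2)%N = \rank W /\ (W1 + W2 == W)%MS].

(* If g x0 has, on W, two complex eigenvalues mu1, mu2 that are not conjugate or
   equal, then W splits into two nonzero invariant subspaces: take the Fitting
   decomposition along N = (g x0 - mu1)(g x0 - conj mu1), a real matrix which
   kills the mu1-eigenvector but not the mu2-eigenvector. *)
Lemma split_invariant W x0 mu1 mu2 : invariant W -> 0 <= x0 ->
  eigenvalueC W (g x0) mu1 -> eigenvalueC W (g x0) mu2 ->
  mu2 != mu1 -> mu2 != conjc mu1 ->
  invariant_split W.
Proof.
move=> invW x0_ge0 [v1 [v10 v1W v1A]] [v2 [v20 v2W v2A]] ne1 ne2.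
set A := g x0; pose s := complex.Re (mu1 + conjc mu1).
pose t := complex.Re (mu1 * conjc mu1); pose N := A *m (A - s%:M) + t%:M.
have eigN (v : 'rV[R[i]]_n) mu : v *m phi A = mu *: v ->
    v *m phi (N ^+ n) = ((mu - mu1) * (mu - conjc mu1)) ^+ n *: v.
  move=> vA; have vN : v *m phi N = ((mu - mu1) * (mu - conjc mu1)) *: v.
    rewrite map_mxD map_mxM map_mxB !map_scalar_mx (eigenvector_quadratic _ _ vA).
    by rewrite /s /t /= Re_addcJ Re_mulcJ; congr (_ *: _); ring.
  by rewrite rmorphXn; apply: eigenvector_pow.
have commN x : 0 <= x -> comm_mx (g x) N.
  move=> x_ge0; have cA : comm_mx (g x) A by exact: semigroup_comm.
  exact: comm_mxD (comm_mxM cA (comm_mxB cA (comm_mx_scalar _ _))) (comm_mx_scalar _ _).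
have WN : stablemx W N.
  have WA := invW x0 x0_ge0; apply: stablemxD; last exact: stablemxC.
  by apply: stablemxM => //; apply: stablemxD; rewrite ?stablemxN ?stablemxC.
have [inv1 inv2 rkW sumW] := invariant_fitting_split invW WN commN.
have n_gt0 : (0 < n)%N := leq_trans (mxrank_gt0_map v10 v1W) (rank_leq_col W).
exists (W :&: kermx (N ^+ n))%MS, (W *m N ^+ n); split=> //.
- apply: (mxrank_gt0_map v10); rewrite map_capmx sub_capmx v1W map_kermx sub_kermx.
  by rewrite (eigN _ _ v1A) subrr mul0r expr0n eqn0Ngt n_gt0 /= scale0r.
- have nz : (mu2 - mu1) * (mu2 - conjc mu1) != 0 by rewrite mulf_neq0 // subr_eq0.
  apply: (@mxrank_gt0_map _ _ _ (v2 *m phi (N ^+ n))).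
    by rewrite (eigN _ _ v2A) scalemx_eq0 negb_or v20 expf_neq0.
  by move/submxP: v2W => [D ->]; rewrite -mulmxA -map_mxM submxMl.
Qed.

Definition primary (U : 'M[R]_n) : Prop :=
  forall x, 0 <= x -> exists lam : R[i],
    forall mu, eigenvalueC U (g x) mu -> mu = lam \/ mu = conjc lam.

Lemma primary_or_split W : invariant W -> (0 < \rank W)%N ->
  primary W \/ invariant_split W.
Proof.
move=> invW W_gt0.
have [[x [mu1 [mu2 [x_ge0 e1 e2 ne1 ne2]]]]|nosplit] := pselect (exists x mu1 mu2,
    [/\ 0 <= x, eigenvalueC W (g x) mu1, eigenvalueC W (g x) mu2,
        mu2 != mu1 & mu2 != conjc mu1]).
  by right; apply: split_invariant e1 e2 ne1 ne2.
left=> x x_ge0; have [mu1 e1] := eigenvalueC_exists (invW x x_ge0) W_gt0.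
exists mu1 => mu e; have [->|ne1] := eqVneq mu mu1; first by left.
have [->|ne2] := eqVneq mu (conjc mu1); first by right.
by case: nosplit; exists x, mu1, mu.
Qed.

Definition primary_decomposition (W : 'M[R]_n) (s : seq 'M[R]_n) : Prop :=
  [/\ forall U, U \in s -> [/\ (0 < \rank U)%N, invariant U & primary U],
      (\sum_(U <- s) \rank U)%N = \rank W
    & (\sum_(U <- s) U == W)%MS].

Lemma primary_decomposition_nil W : \rank W = 0%N -> primary_decomposition W [::].
Proof.
move/eqP; rewrite mxrank_eq0 => /eqP ->; split=> //; first by rewrite big_nil mxrank0.
by rewrite big_nil submx_refl.
Qed.

Lemma primary_decomposition_self W : (0 < \rank W)%N -> invariant W -> primary W ->
  primary_decomposition W [:: W].
Proof.
by move=> *; split; rewrite ?big_seq1 ?submx_refl // => U; rewrite inE => /eqP ->.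
Qed.

Lemma primary_decomposition_cat W W1 W2 s1 s2 :
  primary_decomposition W1 s1 -> primary_decomposition W2 s2 ->
  (\rank W1 + \rank W2)%N = \rank W -> (W1 + W2 == W)%MS ->
  primary_decomposition W (s1 ++ s2).
Proof.
move=> [p1 r1 e1] [p2 r2 e2] rkW eW; split.
- by move=> U; rewrite mem_cat => /orP[]; [apply: p1 | apply: p2].
- by rewrite big_cat /= r1 r2.
rewrite big_cat /=; apply/eqmxP; apply: eqmx_trans (eqmxP eW).
exact: adds_eqmx (eqmxP e1) (eqmxP e2).
Qed.

Lemma primary_decomposition_exists W : invariant W ->
  exists s, primary_decomposition W s.
Proof.
elim: {W}(\rank W).+1 {-2}W (ltnSn (\rank W)) => // k IH W lt_Wk invW.
have [W0|W_gt0] := posnP (\rank W).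
  by exists [::]; apply: primary_decomposition_nil.
have [primW|[W1 [W2 [inv1 inv2 W1_gt0 W2_gt0 [rkW eW]]]]] :=
  primary_or_split invW W_gt0.
  by exists [:: W]; apply: primary_decomposition_self.
have [s1 d1] : exists s, primary_decomposition W1 s by apply: IH => //; lia.
have [s2 d2] : exists s, primary_decomposition W2 s by apply: IH => //; lia.
by exists (s1 ++ s2); apply: primary_decomposition_cat d1 d2 rkW eW.
Qed.

Lemma primary_spectrum U : primary U -> exists lam : R -> R[i],
  forall x, 0 <= x -> forall mu,
    eigenvalueC U (g x) mu -> mu = lam x \/ mu = conjc (lam x).
Proof.
move=> primU; have /choice[lam lamP] : forall x, exists lam : R[i],
    0 <= x -> forall mu, eigenvalueC U (g x) mu -> mu = lam \/ mu = conjc lam.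
  move=> x; have [x_ge0|x_lt0] := boolP (0 <= x).
    by have [lam lamP] := primU x x_ge0; exists lam.
  by exists 0 => x_ge0; case/negP: x_lt0.
by exists lam.
Qed.

Lemma eigenvalueC_double U y nu : 0 <= y ->
  eigenvalueC U (g y) nu -> eigenvalueC U (g (y + y)) (nu ^+ 2).
Proof.
move=> y_ge0 [v [v0 vU vg]]; exists v; split=> //.
by rewrite gD // map_mxM mulmxA vg -scalemxAl vg scalerA expr2.
Qed.

(* If the conjugate pairs are all real, the spectrum of g x on U is a single
   real eigenvalue, and it is nonnegative since g x = g (x/2) ^ 2. *)
Lemma real_spectrum_case1 U (lam : R -> R[i]) : (0 < \rank U)%N -> invariant U ->
  (forall x, 0 <= x -> forall mu,
     eigenvalueC U (g x) mu -> mu = lam x \/ mu = conjc (lam x)) ->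
  (forall x, 0 <= x -> lam x \is Num.real) -> case1 U g.
Proof.
move=> U_gt0 invU lamP lam_real.
have eigE x mu : 0 <= x -> eigenvalueC U (g x) mu -> mu = (complex.Re (lam x))%:C.
  move=> x_ge0 /(lamP x x_ge0); rewrite RRe_real ?lam_real //.
  by have /complex_realP[r ->] := lam_real x x_ge0; rewrite conjc_real; case.
move=> x x_ge0; exists (complex.Re (lam x)); split.
  have h_ge0 : 0 <= x / 2 by rewrite divr_ge0.
  have [nu e] := eigenvalueC_exists (invU _ h_ge0) U_gt0.
  have := eigenvalueC_double h_ge0 e; rewrite -splitr => /(eigE _ _ x_ge0).
  by rewrite (eigE _ _ h_ge0 e) -rmorphXn => /complexI <-; apply: sqr_ge0.
move=> mu; apply/idP/eqP => [/(eigenvalueCP (invU x x_ge0))|->]; first exact: eigE.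
have [mu0 e0] := eigenvalueC_exists (invU x x_ge0) U_gt0.
by apply/(eigenvalueCP (invU x x_ge0)); rewrite -(eigE _ _ x_ge0 e0).
Qed.

Lemma primary_cases U : (0 < \rank U)%N -> invariant U -> primary U ->
  case1 U g \/ case2 U g.
Proof.
move=> U_gt0 invU /primary_spectrum[lam lamP].
have [[x [x_ge0 nonreal]]|allreal] := pselect (exists x, 0 <= x /\ Im (lam x) != 0).
  right; exists lam; split; last by exists x.
  by move=> y y_ge0 mu /(eigenvalueCP (invU y y_ge0)); apply: lamP.
left; apply: (real_spectrum_case1 U_gt0 invU lamP) => x x_ge0.
by apply/Creal_ImP/eqP/negbNE/negP => nonreal; apply: allreal; exists x.
Qed.

End Semigroup.

Theorem mainTheorem2 (R : realType) (n : nat) (g : R -> 'M[R]_n)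
    (g0 : g 0 = 1%:M)
    (gD : forall x y : R, 0 <= x -> 0 <= y -> g (x + y) = g x *m g y) :
  exists (m : nat) (V : 'I_m -> 'M[R]_n),
    [/\ forall i, (0 < \rank (V i))%N,
        mxdirect (\sum_i V i)%MS,
        row_full (\sum_i V i)%MS,
        forall i (x : R), 0 <= x -> (V i *m g x <= V i)%MS
      & forall i, case1 (V i) g \/ case2 (V i) g].
Proof.
have inv_full : invariant g (1%:M : 'M[R]_n) by move=> x _; apply: submx1.
have [s [primS rankS sumS]] := primary_decomposition_exists gD inv_full.
pose V (i : 'I_(size s)) := nth 0 s i.
have V_in i : V i \in s by apply: mem_nth.
have sumV : (\sum_i V i)%MS = (\sum_(U <- s) U)%MS.
  by rewrite [RHS](big_nth 0) big_mkord.
have rank_sumV : \rank (\sum_i V i)%MS = n by rewrite sumV (eqmx_rank sumS) mxrank1.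
exists (size s), V; split.
- by move=> i; have [] := primS _ (V_in i).
- have rankV : (\sum_i \rank (V i))%N = (\sum_(U <- s) \rank U)%N.
    by rewrite [RHS](big_nth 0) big_mkord.
  by rewrite mxdirectE /= rank_sumV rankV rankS mxrank1.
- by rewrite /row_full rank_sumV.
- by move=> i; have [] := primS _ (V_in i).
by move=> i; have [V_gt0 invV primV] := primS _ (V_in i); apply: primary_cases.
Qed.
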